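(* There is an absolute constant $C$ such that if $E\subset\mathbb{Z}^2$ is sparse with respect to a sequence $(\alpha_k,\beta_k)_{k\ge1}$ (integers, $\alpha_k\le\beta_k$), then the Besicovitch density of $E$ is at most $C\sum_k(\alpha_k/\beta_k)^2$.
   Context: Distances on $\mathbb{Z}^2$ are $\ell_\infty$; the diameter of a set is the maximal distance between its elements; the $\beta$-neighborhood of $X$ is the set of points at distance at most $\beta$ from some point of $X$. For $E\subset\mathbb{Z}^2$ and integers $\beta\ge\alpha>0$, a nonempty $X\subset E$ is an $(\alpha,\beta)$-island in $E$ if its diameter is at most $\alpha$ and the $\beta$-neighborhood of $X$ contains no point of $E\setminus X$. The cleaning process sets $E_0=E$ and obtains $E_i$ from $E_{i-1}$ by removing all $(\alpha_i,\beta_i)$-islands of $E_{i-1}$ (rank $i$ islands); a point is affected at step $i$ if it lies in the $\beta_i$-neighborhood of some rank $i$ island. $E$ is sparse if every point of $E$ is removed at some step and every point of $\mathbb{Z}^2$ is affected at only finitely many steps. The Besicovitch density of $E$ is $\limsup_{n\to\infty}$ of the fraction of points of $E$ in the square of side $n$ centered at a fixed point (independent of the point). *)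

From Stdlib Require Import Reals ZArith List Lia.
Import ListNotations.
Open Scope R_scope.

Definition point : Type := (Z * Z)%type.

Definition dist (p q : point) : Z :=
  Z.max (Z.abs (fst p - fst q)) (Z.abs (snd p - snd q)).

Definition island (a b : Z) (F X : point -> Prop) : Prop :=
  (exists x, X x) /\
  (forall x, X x -> F x) /\
  (forall x y, X x -> X y -> (dist x y <= a)%Z) /\
  (forall x y, X x -> F y -> (dist y x <= b)%Z -> X y).

Fixpoint cleaned (alpha beta : nat -> Z) (E : point -> Prop) (i : nat)
  : point -> Prop :=
  match i with
  | O => E
  | S j => fun p => cleaned alpha beta E j p /\
      ~ (exists X, island (alpha (S j)) (beta (S j)) (cleaned alpha beta E j) X
                   /\ X p)
  end.

Definition affected (alpha beta : nat -> Z) (E : point -> Prop) (i : nat)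
  (p : point) : Prop :=
  exists X, island (alpha i) (beta i) (cleaned alpha beta E (i - 1)) X /\
            exists x, X x /\ (dist p x <= beta i)%Z.

Definition sparse (alpha beta : nat -> Z) (E : point -> Prop) : Prop :=
  (forall p, E p -> exists i, (1 <= i)%nat /\
      cleaned alpha beta E (i - 1) p /\ ~ cleaned alpha beta E i p) /\
  (forall p, exists N, forall i, (1 <= i)%nat -> affected alpha beta E i p ->
      (i <= N)%nat).

Definition Zrange (n : nat) : list Z :=
  map (fun k => (Z.of_nat k - Z.of_nat n)%Z) (seq 0 (2 * n + 1)).

Definition count_in_square (E : point -> bool) (n : nat) : nat :=
  length (filter E (list_prod (Zrange n) (Zrange n))).

Definition density_ratio (E : point -> bool) (n : nat) : R :=
  INR (count_in_square E n) / INR ((2 * n + 1) * (2 * n + 1)).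

(* Besicovitch density of E is at most L, i.e.
   limsup_n density_ratio E n <= L. *)
Definition besicovitch_density_le (E : point -> bool) (L : R) : Prop :=
  forall eps, 0 < eps -> exists N : nat, forall n : nat, (N <= n)%nat ->
    density_ratio E n <= L + eps.

(* Every point of E is removed at some
   rank k >= 1, and two points removed at the same rank k lie in rank-k
   islands, so whenever they are at distance <= beta_k they are in fact at
   distance <= alpha_k.  A packing argument then bounds the number of rank-k
   points in the square [-n, n]^2: cutting the plane into beta_k x beta_k
   blocks, each block holds at most (2 alpha_k + 1)^2 of them, and at most
   (2 n / beta_k + 3)^2 blocks meet the square; this gives
   #(rank-k points) * beta_k^2 <= 225 * alpha_k^2 * (2n+1)^2, provided
   beta_k <= n.  The proviso holds for n large: a rank-k point of the square
   with beta_k > n would make the origin affected at step k, and the origin is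
   affected only at finitely many steps.  Summing over k gives the theorem
   with C = 225. *)

From Pilot Require Import Defs.
From Stdlib Require Import Reals ZArith List Lia Lra ClassicalEpsilon Classical.
Open Scope Z_scope.
(* The l_infinity distance of Defs, not the metric-space [dist] of Reals. *)
Local Notation dist := Pilot.Defs.dist.

Definition holds {A} (P : A -> Prop) (x : A) : bool :=
  if excluded_middle_informative (P x) then true else false.

Lemma holds_spec {A} (P : A -> Prop) x : holds P x = true <-> P x.
Proof. unfold holds; destruct excluded_middle_informative; split; congruence || tauto. Qed.

Lemma length_le_sum_classes {A C} (l : list A) (Cs : list C) (D : C -> A -> Prop) :
  NoDup l -> (forall x, In x l -> exists c, In c Cs /\ D c x) ->
  (length l <= list_sum (map (fun c => length (filter (holds (D c)) l)) Cs))%nat.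
Proof.
  intros Hnd Hcov. rewrite <- length_flat_map.
  apply NoDup_incl_length; [exact Hnd|]. intros x Hx.
  destruct (Hcov x Hx) as [c [Hc Dcx]].
  apply in_flat_map. exists c. split; [exact Hc|].
  apply filter_In. split; [exact Hx|]. apply holds_spec, Dcx.
Qed.

Lemma list_sum_le_mul {A} (g : A -> nat) M Cs :
  (forall c, In c Cs -> (g c <= M)%nat) -> (list_sum (map g Cs) <= length Cs * M)%nat.
Proof.
  induction Cs as [|c Cs IH]; simpl; intros H; [lia|].
  specialize (H c (or_introl eq_refl)) as Hc.
  specialize (IH (fun d Hd => H d (or_intror Hd))). lia.
Qed.

Lemma finite_rank_bound {A} (l : list A) (P : A -> nat -> Prop) :
  (forall x, In x l -> exists k, P x k) ->
  exists K, forall x, In x l -> exists k, (k <= K)%nat /\ P x k.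
Proof.
  induction l as [|x l IH]; intros H; [exists O; intros p []|].
  destruct (IH (fun p Hp => H p (or_intror Hp))) as [K HK].
  destruct (H x (or_introl eq_refl)) as [k Hk].
  exists (Nat.max K k). intros p [<-|Hp].
  - exists k; split; [lia|exact Hk].
  - destruct (HK p Hp) as [k' [? ?]]. exists k'; split; [lia|assumption].
Qed.

Lemma NoDup_prod {A B} (l : list A) (l' : list B) :
  NoDup l -> NoDup l' -> NoDup (list_prod l l').
Proof.
  induction 1 as [|a l Ha Hl IH]; intros Hl'; simpl; [constructor|].
  apply NoDup_app.
  - apply NoDup_map_NoDup_ForallPairs; auto.
    intros x y _ _ E; inversion E; auto.
  - auto.
  - intros [x y] H1 H2. apply in_map_iff in H1. destruct H1 as [z [Ez _]].
    inversion Ez; subst. apply in_prod_iff in H2. tauto.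
Qed.

Definition range (c r : Z) : list Z :=
  map (fun k => c - r + Z.of_nat k) (seq 0 (Z.to_nat (2*r+1))).

Lemma range_in c r z : 0 <= r -> c - r <= z <= c + r -> In z (range c r).
Proof.
  intros Hr Hz. unfold range. apply in_map_iff.
  exists (Z.to_nat (z - (c - r))). split.
  - rewrite Z2Nat.id; lia.
  - apply in_seq. lia.
Qed.

Lemma range_length c r : length (range c r) = Z.to_nat (2*r+1).
Proof. unfold range. rewrite length_map, length_seq. reflexivity. Qed.

Lemma dist_sym p q : dist p q = dist q p.
Proof. unfold dist. f_equal; rewrite <- Z.abs_opp; f_equal; ring. Qed.

Lemma ball_card (L : list point) p a :
  0 <= a -> NoDup L -> (forall q, In q L -> dist p q <= a) ->
  (length L <= Z.to_nat (2*a+1) * Z.to_nat (2*a+1))%nat.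
Proof.
  intros Ha Hnd Hball.
  replace (Z.to_nat (2*a+1) * Z.to_nat (2*a+1))%nat
    with (length (list_prod (range (fst p) a) (range (snd p) a)))
    by (rewrite length_prod, !range_length; reflexivity).
  apply NoDup_incl_length; [exact Hnd|]. intros [y1 y2] Hy.
  specialize (Hball _ Hy). unfold dist in Hball; simpl in Hball.
  apply Z.max_lub_iff in Hball.
  apply in_prod_iff; split; apply range_in; lia.
Qed.

Definition block (b : Z) (p : point) : point := (fst p / b, snd p / b).

Lemma div_eq_close x y b : 0 < b -> x / b = y / b -> Z.abs (x - y) <= b - 1.
Proof.
  intros Hb E. pose proof (Z.div_mod x b ltac:(lia)). pose proof (Z.div_mod y b ltac:(lia)).
  pose proof (Z.mod_pos_bound x b Hb). pose proof (Z.mod_pos_bound y b Hb).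
  rewrite E in *. lia.
Qed.

Lemma same_block_close b p q : 0 < b -> block b p = block b q -> dist p q < b.
Proof.
  intros Hb Hpq. unfold block in Hpq. injection Hpq as H1 H2.
  apply div_eq_close in H1, H2; auto. unfold dist. lia.
Qed.

(* The blocks meeting [-n, n]^2 have coordinates in [-(n/b + 1), n/b + 1]. *)
Lemma div_bounds x n b : 0 < b -> Z.abs x <= n -> Z.abs (x / b) <= n / b + 1.
Proof.
  intros Hb Hx. pose proof (Z.div_mod x b ltac:(lia)). pose proof (Z.div_mod n b ltac:(lia)).
  pose proof (Z.mod_pos_bound x b Hb). pose proof (Z.mod_pos_bound n b Hb).
  set (d := x / b) in *. set (q := n / b) in *.
  apply Z.abs_le. split.
  - destruct (Z_le_gt_dec (-(q+1)) d); [assumption|].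
    assert (b * d <= b * (-q-2)) by (apply Z.mul_le_mono_nonneg_l; lia). lia.
  - destruct (Z_le_gt_dec d (q+1)); [assumption|].
    assert (b * (q + 2) <= b * d) by (apply Z.mul_le_mono_nonneg_l; lia). lia.
Qed.

Lemma separated_packing (Q : list point) (n a b : Z) :
  NoDup Q -> 0 < a -> a <= b -> b <= n ->
  (forall p, In p Q -> Z.abs (fst p) <= n /\ Z.abs (snd p) <= n) ->
  (forall p q, In p Q -> In q Q -> dist p q <= b -> dist p q <= a) ->
  Z.of_nat (length Q) * b^2 <= 225 * a^2 * (2*n+1)^2.
Proof.
  intros Hnd Ha Hab Hbn Hsq Hsep.
  set (q := n / b). set (Blocks := range 0 (q+1)).
  assert (Hq : 0 < q) by (apply Z.div_str_pos; lia).
  assert (Hbq : b * q <= n) by (apply Z.mul_div_le; lia).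
  assert (Hcount : (length Q <= length (list_prod Blocks Blocks)
                                * (Z.to_nat (2*a+1) * Z.to_nat (2*a+1)))%nat).
  { eapply Nat.le_trans;
      [apply (length_le_sum_classes Q (list_prod Blocks Blocks) (fun c x => block b x = c))|].
    - exact Hnd.
    - intros x Hx. exists (block b x). split; [|reflexivity].
      destruct (Hsq x Hx). apply in_prod_iff; split; apply range_in; try lia;
        apply Z.abs_le, div_bounds; lia.
    - apply list_sum_le_mul. intros c _.
      destruct (filter (holds (fun x => block b x = c)) Q) as [|p0 L] eqn:HL; [simpl; lia|].
      rewrite <- HL. apply (ball_card _ p0); [lia|apply NoDup_filter, Hnd|].
      assert (Hin : forall x, In x (p0 :: L) -> In x Q /\ block b x = c).
      { intros x Hx. rewrite <- HL in Hx. apply filter_In in Hx.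
        rewrite holds_spec in Hx. exact Hx. }
      intros x Hx. rewrite HL in Hx.
      destruct (Hin p0 (or_introl eq_refl)), (Hin x Hx).
      apply Hsep; auto. apply Z.lt_le_incl, same_block_close; [lia|congruence]. }
  unfold Blocks in Hcount. rewrite length_prod, range_length in Hcount.
  apply Nat2Z.inj_le in Hcount. rewrite !Nat2Z.inj_mul, !Z2Nat.id in Hcount by lia.
  assert (Hlen : Z.of_nat (length Q) <= (5*q)*(5*q)*((3*a)*(3*a))).
  { eapply Z.le_trans; [apply Hcount|].
    apply Z.mul_le_mono_nonneg; try lia; apply Z.mul_le_mono_nonneg; lia. }
  assert (Hbn2 : (b*q)^2 <= (2*n+1)^2) by (apply Z.pow_le_mono_l; nia).
  nia.
Qed.

Definition square (n : nat) : list point := list_prod (Zrange n) (Zrange n).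

Lemma square_bounds n p :
  In p (square n) -> (Z.abs (fst p) <= Z.of_nat n)%Z /\ (Z.abs (snd p) <= Z.of_nat n)%Z.
Proof.
  destruct p as [x y]. unfold square. intros Hxy.
  apply in_prod_iff in Hxy as [Hx Hy]. unfold Zrange in Hx, Hy.
  apply in_map_iff in Hx as [i [<- Hi]], Hy as [j [<- Hj]].
  apply in_seq in Hi, Hj. simpl. lia.
Qed.

Lemma square_NoDup n : NoDup (square n).
Proof.
  assert (HR : NoDup (Zrange n)).
  { unfold Zrange. apply NoDup_map_NoDup_ForallPairs; [|apply seq_NoDup].
    intros x y _ _ E. lia. }
  apply NoDup_prod; exact HR.
Qed.

Section Cleaning.
Variables (alpha beta : nat -> Z) (F : point -> Prop).

Definition removed_at (k : nat) (p : point) : Prop :=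
  cleaned alpha beta F (k - 1) p /\ ~ cleaned alpha beta F k p.

Lemma removed_in_island k p : (1 <= k)%nat -> removed_at k p ->
  exists X, island (alpha k) (beta k) (cleaned alpha beta F (k-1)) X /\ X p.
Proof.
  intros Hk [Hin Hout]. destruct k as [|j]; [lia|]. simpl in *.
  rewrite Nat.sub_0_r in *. apply NNPP. intros Hno. apply Hout. split; assumption.
Qed.

(* Two points removed at the same step k, at distance <= beta_k, lie in the
   same island and hence are at distance <= alpha_k. *)
Lemma removed_separated k p q : (1 <= k)%nat -> removed_at k p -> removed_at k q ->
  dist p q <= beta k -> dist p q <= alpha k.
Proof.
  intros Hk Hp Hq Hd.
  destruct (removed_in_island k p Hk Hp) as [X [[_ [_ [Hdiam Hnbhd]]] Xp]].
  destruct (removed_in_island k q Hk Hq) as [Y [[_ [HYF _]] Yq]].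
  apply Hdiam; [exact Xp|]. apply (Hnbhd p q Xp (HYF q Yq)). rewrite dist_sym. exact Hd.
Qed.

Lemma removed_affects k p o : (1 <= k)%nat -> removed_at k p ->
  dist o p <= beta k -> affected alpha beta F k o.
Proof.
  intros Hk Hp Hd. destruct (removed_in_island k p Hk Hp) as [X [HX Xp]].
  exists X. split; [exact HX|]. exists p. split; assumption.
Qed.

Lemma rank_count (N0 : nat) (n : Z) (k : nat) (Q : list point) :
  (1 <= k)%nat -> 0 < alpha k <= beta k ->
  (forall i, (1 <= i)%nat -> affected alpha beta F i (0, 0) -> (i <= N0)%nat) ->
  (forall i, (i <= N0)%nat -> beta i <= n) ->
  NoDup Q ->
  (forall p, In p Q -> removed_at k p /\ Z.abs (fst p) <= n /\ Z.abs (snd p) <= n) ->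
  Z.of_nat (length Q) * beta k ^ 2 <= 225 * alpha k ^ 2 * (2 * n + 1) ^ 2.
Proof.
  intros Hk Hab Haff Hbeta Hnd HQ.
  destruct Q as [|p0 Q'] eqn:HQ0.
  { cbn [length Z.of_nat]. rewrite !Z.pow_2_r, Z.mul_0_l. apply Z.mul_nonneg_nonneg; nia. }
  rewrite <- HQ0 in *.
  assert (Hbn : beta k <= n).
  { destruct (HQ p0) as [Hr [H1 H2]]; [subst; left; reflexivity|].
    destruct (Z_le_gt_dec (beta k) n) as [|Hgt]; [assumption|].
    apply Hbeta, Haff; [exact Hk|]. apply (removed_affects k p0); [exact Hk|exact Hr|].
    unfold dist; simpl. lia. }
  apply separated_packing; try lia; [exact Hnd| |].
  - intros p Hp. apply HQ, Hp.
  - intros p q Hp Hq. apply removed_separated; [exact Hk|apply HQ, Hp|apply HQ, Hq].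
Qed.
End Cleaning.

Open Scope R_scope.

Lemma count_ratio_le (L : nat) (a b c : Z) :
  (Z.of_nat L * b^2 <= 225 * a^2 * c)%Z -> (0 < b)%Z ->
  INR L <= 225 * IZR c * (IZR a / IZR b)^2.
Proof.
  intros H Hb. rewrite !Z.pow_2_r in H. apply IZR_le in H. rewrite !mult_IZR in H.
  rewrite INR_IZR_INZ. apply IZR_lt in Hb.
  replace (225 * IZR c * (IZR a / IZR b) ^ 2)
    with ((225 * IZR a * IZR a * IZR c) / (IZR b * IZR b)) by (field; lra).
  apply (Rmult_le_reg_r (IZR b * IZR b)); [nra|].
  unfold Rdiv. rewrite Rmult_assoc, Rinv_l by nra. lra.
Qed.

Lemma rank_density_bound alpha beta (F : point -> Prop) (N0 n k : nat) (Q : list point) :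
  (1 <= k)%nat -> (0 < alpha k <= beta k)%Z ->
  (forall i, (1 <= i)%nat -> affected alpha beta F i (0%Z, 0%Z) -> (i <= N0)%nat) ->
  (forall i, (i <= N0)%nat -> (beta i <= Z.of_nat n)%Z) ->
  NoDup Q -> (forall p, In p Q -> removed_at alpha beta F k p /\ In p (square n)) ->
  INR (length Q) <= 225 * INR ((2 * n + 1) * (2 * n + 1)) * (IZR (alpha k) / IZR (beta k)) ^ 2.
Proof.
  intros Hk Hab Haff Hbeta Hnd HQ.
  replace (INR ((2 * n + 1) * (2 * n + 1))) with (IZR ((2 * Z.of_nat n + 1) ^ 2))
    by (rewrite INR_IZR_INZ; f_equal; lia).
  apply count_ratio_le; [|lia].
  apply (rank_count alpha beta F N0); try assumption.
  intros p Hp. destruct (HQ p Hp) as [Hr Hsq]. split; [exact Hr|]. apply square_bounds, Hsq.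
Qed.

Lemma INR_list_sum_seq (f : nat -> nat) K :
  INR (list_sum (map f (seq 0 (S K)))) = sum_f_R0 (fun j => INR (f j)) K.
Proof.
  induction K as [|K IH]; [simpl; rewrite Nat.add_0_r; reflexivity|].
  rewrite seq_S, map_app, list_sum_app, plus_INR, IH. simpl. rewrite Nat.add_0_r. reflexivity.
Qed.

Lemma length_le_rank_sum {A} (l : list A) (P : nat -> A -> Prop) :
  NoDup l -> (forall x, In x l -> exists j, P j x) ->
  exists K, INR (length l) <= sum_f_R0 (fun j => INR (length (filter (holds (P j)) l))) K.
Proof.
  intros Hnd Hrank.
  destruct (finite_rank_bound l (fun x j => P j x) Hrank) as [K HK].
  exists K. rewrite <- INR_list_sum_seq. apply le_INR, length_le_sum_classes; [exact Hnd|].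
  intros x Hx. destruct (HK x Hx) as [j [Hj Hr]].
  exists j. split; [apply in_seq; lia|exact Hr].
Qed.

Lemma scaled_partial_sum_le (t : nat -> R) l m K :
  (forall j, 0 <= t j) -> infinite_sum t l -> 0 <= m ->
  sum_f_R0 (fun j => m * t j) K <= m * l.
Proof.
  intros Ht HS Hm.
  assert (Hpartial : sum_f_R0 t K <= l).
  { apply growing_ineq; [|exact HS]. intros i. simpl. specialize (Ht (S i)). lra. }
  rewrite (sum_eq _ (fun j => t j * m)) by (intros; ring).
  rewrite <- scal_sum. apply Rmult_le_compat_l; assumption.
Qed.

Lemma density_ratio_le (E : point -> bool) n X :
  INR (count_in_square E n) <= X * INR ((2 * n + 1) * (2 * n + 1)) -> density_ratio E n <= X.
Proof.
  intros H. assert (Hc : 0 < INR ((2 * n + 1) * (2 * n + 1))) by (apply lt_0_INR; lia).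
  unfold density_ratio. apply (Rmult_le_reg_r _ _ _ Hc).
  unfold Rdiv. rewrite Rmult_assoc, Rinv_l by lra. lra.
Qed.

Lemma beta_bound (beta : nat -> Z) (M : nat) :
  exists N : nat, forall n k, (N <= n)%nat -> (k <= M)%nat -> (beta k <= Z.of_nat n)%Z.
Proof.
  induction M as [|M [N HN]].
  - exists (Z.to_nat (beta O)). intros n k Hn Hk. replace k with O by lia. lia.
  - exists (Nat.max N (Z.to_nat (beta (S M)))). intros n k Hn Hk.
    destruct (Nat.eq_dec k (S M)); [subst; lia|].
    apply HN; lia.
Qed.

Theorem lemma2 :
  exists C : R,
    forall (alpha beta : nat -> Z) (E : point -> bool) (Ssum : R),
      (forall k : nat, (1 <= k)%nat ->
         (0 < alpha k)%Z /\ (alpha k <= beta k)%Z) ->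
      sparse alpha beta (fun p => E p = true) ->
      infinite_sum (fun k : nat => (IZR (alpha (S k)) / IZR (beta (S k))) ^ 2) Ssum ->
      besicovitch_density_le E (C * Ssum).
Proof.
  exists 225. intros alpha beta E Ssum Hab [Hrem Haff] Hsum eps Heps.
  set (F := fun p => E p = true).
  destruct (Haff (0%Z, 0%Z)) as [N0 HN0]. destruct (beta_bound beta N0) as [N HN].
  exists N. intros n Hn.
  set (L := filter E (square n)).
  assert (HL : forall p, In p L -> In p (square n) /\ F p) by (intros p; apply filter_In).
  assert (HLnd : NoDup L) by apply NoDup_filter, square_NoDup.
  destruct (length_le_rank_sum L (fun j => removed_at alpha beta F (S j))) as [K HK];
    [exact HLnd| |].
  { intros p Hp. destruct (Hrem p (proj2 (HL p Hp))) as [[|j] [Hj Hr]]; [lia|].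
    exists j; exact Hr. }
  set (c := INR ((2 * n + 1) * (2 * n + 1))).
  apply Rle_trans with (225 * Ssum); [|lra].
  apply density_ratio_le. eapply Rle_trans; [exact HK|].
  apply Rle_trans with (sum_f_R0 (fun j => (225 * c) * (IZR (alpha (S j)) / IZR (beta (S j))) ^ 2) K).
  - apply sum_Rle. intros j _.
    apply (rank_density_bound alpha beta F N0);
      [lia|apply Hab; lia|exact HN0|intros; apply HN; assumption|..].
    + apply NoDup_filter, HLnd.
    + intros p Hp. apply filter_In in Hp as [Hp Hr].
      split; [apply (holds_spec (removed_at alpha beta F (S j))), Hr|apply HL, Hp].
  - assert (Hc : 0 <= c) by apply pos_INR.
    eapply Rle_trans; [apply scaled_partial_sum_le; [intros; apply pow2_ge_0|exact Hsum|lra]|].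
    unfold c. right. ring.
Qed.
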